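(* Fix an Outcome Logic instance with execution model $\langle M,\mathsf{bind},\mathsf{unit},\diamond,\varnothing\rangle$ and set of program states $\Sigma$. For every program $C$ and all semantic assertions $\Phi,\Psi\subseteq M\Sigma$: \[ \not\vDash_S\langle\Phi\rangle\, C\,\langle\Psi\rangle \quad\text{iff}\quad \exists\,\Phi'\subseteq M\Sigma \text{ such that } \Phi'\subseteq\Phi,\ \Phi'\neq\emptyset,\ \text{and } \vDash_S\langle\Phi'\rangle\, C\,\langle M\Sigma\setminus\Psi\rangle . \]
   Context: An execution model is a tuple $\langle M,\mathsf{bind},\mathsf{unit},\diamond,\varnothing\rangle$ where $\langle M,\mathsf{bind},\mathsf{unit}\rangle$ is a monad on the category of sets and, for every set $A$, $(MA,\diamond,\varnothing)$ is a partial commutative monoid (a partial associative commutative binary operation $\diamond$ with unit $\varnothing$) such that $\mathsf{bind}(m_1\diamond m_2,k)=\mathsf{bind}(m_1,k)\diamond\mathsf{bind}(m_2,k)$ and $\mathsf{bind}(\varnothing,k)=\varnothing$. For $f\colon A\to MB$ write $f^\dagger(m)=\mathsf{bind}(m,f)$. An Outcome Logic (OL) instance additionally fixes a set $\Sigma$ of program states and atomic-command semantics $[\![c]\!]_{\mathsf{atom}}\colon\Sigma\to M\Sigma$. Programs are $C::=\mathbb{0}\mid\mathbb{1}\mid C_1; C_2\mid C_1+C_2\mid C^\star\mid c$ with $[\![\mathbb{0}]\!](\sigma)=\varnothing$, $[\![\mathbb{1}]\!](\sigma)=\mathsf{unit}(\sigma)$, $[\![C_1;C_2]\!](\sigma)=\mathsf{bind}([\![C_1]\!](\sigma),[\![C_2]\!])$,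 $[\![C_1+C_2]\!](\sigma)=[\![C_1]\!](\sigma)\diamond[\![C_2]\!](\sigma)$, $[\![C^\star]\!]$ the least fixed point of $f\mapsto\lambda\sigma.\,f^\dagger([\![C]\!](\sigma))\diamond\mathsf{unit}(\sigma)$, and $[\![c]\!]=[\![c]\!]_{\mathsf{atom}}$. A semantic assertion is a subset of $M\Sigma$; the semantic triple $\vDash_S\langle\Phi\rangle C\langle\Psi\rangle$ holds iff for all $m\in M\Sigma$, $m\in\Phi$ implies $[\![C]\!]^\dagger(m)\in\Psi$. *)

From Stdlib Require Import ClassicalEpsilon.

Set Implicit Arguments.



(** Execution model <M, bind, unit, diamond, empty>.
    The partial operation [diamond] is a total function together with a
    definedness predicate [pdef]; laws are stated under definedness. *)
Record ExecModel := {
  M : Type -> Type;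
  bind : forall A B : Type, M A -> (A -> M B) -> M B;
  unit : forall A : Type, A -> M A;
  bind_unit_l : forall A B (a : A) (k : A -> M B), bind (unit a) k = k a;
  bind_unit_r : forall A (m : M A), bind m (@unit A) = m;
  bind_assoc : forall A B C (m : M A) (k : A -> M B) (h : B -> M C),
      bind (bind m k) h = bind m (fun a => bind (k a) h);
  pdef : forall A : Type, M A -> M A -> Prop;
  diamond : forall A : Type, M A -> M A -> M A;
  empty : forall A : Type, M A;
  pdef_comm : forall A (m1 m2 : M A), pdef m1 m2 -> pdef m2 m1;
  diamond_comm : forall A (m1 m2 : M A),
      pdef m1 m2 -> diamond m1 m2 = diamond m2 m1;
  pdef_assoc : forall A (m1 m2 m3 : M A),
      pdef m1 m2 -> pdef (diamond m1 m2) m3 ->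
      pdef m2 m3 /\ pdef m1 (diamond m2 m3);
  pdef_assoc' : forall A (m1 m2 m3 : M A),
      pdef m2 m3 -> pdef m1 (diamond m2 m3) ->
      pdef m1 m2 /\ pdef (diamond m1 m2) m3;
  diamond_assoc : forall A (m1 m2 m3 : M A),
      pdef m1 m2 -> pdef (diamond m1 m2) m3 ->
      diamond (diamond m1 m2) m3 = diamond m1 (diamond m2 m3);
  pdef_empty : forall A (m : M A), pdef m (@empty A);
  diamond_empty : forall A (m : M A), diamond m (@empty A) = m;
  bind_pdef : forall A B (m1 m2 : M A) (k : A -> M B),
      pdef m1 m2 -> pdef (bind m1 k) (bind m2 k);
  bind_diamond : forall A B (m1 m2 : M A) (k : A -> M B),
      pdef m1 m2 -> bind (diamond m1 m2) k = diamond (bind m1 k) (bind m2 k);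
  bind_empty : forall A B (k : A -> M B), bind (@empty A) k = @empty B;
  (* the order on M A with respect to which [C^*] is a least fixed point *)
  ord : forall A : Type, M A -> M A -> Prop;
  ord_refl : forall A (m : M A), ord m m;
  ord_trans : forall A (m1 m2 m3 : M A), ord m1 m2 -> ord m2 m3 -> ord m1 m3;
  ord_antisym : forall A (m1 m2 : M A), ord m1 m2 -> ord m2 m1 -> m1 = m2
}.

Arguments bind {e A B}.
Arguments unit {e A}.
Arguments diamond {e A}.
Arguments empty {e A}.
Arguments ord {e A}.
Arguments pdef {e A}.

Definition dagger (E : ExecModel) (A B : Type) (f : A -> M E B) : M E A -> M E B :=
  fun m => bind m f.

Inductive prog (Atom : Type) : Type :=
| Zero : prog Atom
| One : prog Atom
| Seq : prog Atom -> prog Atom -> prog Atom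
| Choice : prog Atom -> prog Atom -> prog Atom
| Star : prog Atom -> prog Atom
| Atm : Atom -> prog Atom.

Arguments Zero {Atom}.
Arguments One {Atom}.

Definition is_lfp (E : ExecModel) (Sigma : Type)
    (F : (Sigma -> M E Sigma) -> (Sigma -> M E Sigma)) (f : Sigma -> M E Sigma) : Prop :=
  F f = f /\ forall g, F g = g -> forall s, ord (f s) (g s).

Definition lfp (E : ExecModel) (Sigma : Type)
    (F : (Sigma -> M E Sigma) -> (Sigma -> M E Sigma)) : Sigma -> M E Sigma :=
  epsilon (inhabits (fun s => @unit E Sigma s)) (@is_lfp E Sigma F).

Definition sem (E : ExecModel) (Sigma Atom : Type)
    (atom_sem : Atom -> Sigma -> M E Sigma) : prog Atom -> Sigma -> M E Sigma :=
  fix go (C : prog Atom) : Sigma -> M E Sigma :=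
  match C with
  | Zero => fun _ => empty
  | One => fun s => unit s
  | Seq C1 C2 => fun s => bind (go C1 s) (go C2)
  | Choice C1 C2 => fun s => diamond (go C1 s) (go C2 s)
  | Star C1 => @lfp E Sigma (fun f s => diamond (@dagger E Sigma Sigma f (go C1 s)) (unit s))
  | Atm c => atom_sem c
  end.

Definition assertion (E : ExecModel) (Sigma : Type) := M E Sigma -> Prop.

Definition sem_triple (E : ExecModel) (Sigma Atom : Type)
    (atom_sem : Atom -> Sigma -> M E Sigma)
    (Phi : assertion E Sigma) (C : prog Atom) (Psi : assertion E Sigma) : Prop :=
  forall m : M E Sigma, Phi m -> Psi (@dagger E Sigma Sigma (@sem E Sigma Atom atom_sem C) m).

(* Falsification needs nothing about the execution model: a triple fails exactly
   when some [m] in [Phi] is sent outside [Psi], and the singleton [{m}] is then a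
   nonempty sub-precondition whose outcomes all lie outside [Psi]. *)
From Stdlib Require Import Classical.

Section SemTriple.

Variables (E : ExecModel) (Sigma Atom : Type).
Variable atom_sem : Atom -> Sigma -> M E Sigma.

Local Notation triple := (@sem_triple E Sigma Atom atom_sem).
Local Notation run C := (@dagger E Sigma Sigma (@sem E Sigma Atom atom_sem C)).

Lemma not_sem_tripleP (Phi : assertion E Sigma) (C : prog Atom) (Psi : assertion E Sigma) :
  ~ triple Phi C Psi <-> exists m, Phi m /\ ~ Psi (run C m).
Proof.
  split.
  - intros Hfail.
    apply not_all_ex_not in Hfail as [m Hm].
    apply imply_to_and in Hm.
    exists m; exact Hm.
  - intros [m [HPhi HPsi]] Htriple.
    exact (HPsi (Htriple m HPhi)).
Qed.

Lemma sem_triple_eq (m : M E Sigma) (C : prog Atom) (Psi : assertion E Sigma) :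
  triple (fun x => x = m) C Psi <-> Psi (run C m).
Proof.
  split.
  - intros Htriple; exact (Htriple m eq_refl).
  - intros HPsi x ->; exact HPsi.
Qed.

End SemTriple.

Theorem theorem5p1 (E : ExecModel) (Sigma Atom : Type)
    (atom_sem : Atom -> Sigma -> M E Sigma) (C : prog Atom)
    (Phi Psi : assertion E Sigma) :
  ~ @sem_triple E Sigma Atom atom_sem Phi C Psi <->
  exists Phi' : assertion E Sigma,
    (forall m, Phi' m -> Phi m) /\
    (exists m, Phi' m) /\
    @sem_triple E Sigma Atom atom_sem Phi' C (fun m => ~ Psi m).
Proof.
  rewrite not_sem_tripleP.
  split.
  - intros [m [HPhi HPsi]].
    exists (fun x => x = m).
    split; [| split].
    + intros x ->; exact HPhi.
    + exists m; reflexivity.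
    + apply sem_triple_eq; exact HPsi.
  - intros [Phi' [Hsub [[m HPhi'] Hneg]]].
    exists m; split.
    + exact (Hsub m HPhi').
    + exact (Hneg m HPhi').
Qed.
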